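(* Let $A=\sum_{j=1}^\infty E_j$, where $E_j$ are rank-one projections on a separable Hilbert space $H$ and the series converges in the strong operator topology. Let $\xi$ be a sequence whose entries consist of the entries of $\mu=\langle\mu_j\rangle_{j=1}^M$ and of $1-\lambda=\langle1-\lambda_j\rangle_{j=1}^N$ ($0\le M,N\le\infty$), where $0<\mu_j\le\frac12$ and $0<\lambda_j<\frac12$. If $\sum_{j=1}^M\mu_j=\infty$, then $\xi\in\operatorname{Adm}(A)$.
   Context: $\operatorname{Adm}(A)$ is the set of sequences $\xi\in\ell^\infty_+$ such that $A=\sum_j\xi_jP_j$ for some rank-one projections $P_j$ (series converging in the strong operator topology if infinite); admissibility is invariant under permutation of the sequence. *)

(* the separable (infinite-dimensional) complex Hilbert space is
   modelled concretely as l^2(N; C), with C represented as R * R. *)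
From Stdlib Require Import Reals.
Open Scope R_scope.

Definition C := (R * R)%type.
Definition cmul (z w : C) : C :=
  (fst z * fst w - snd z * snd w, fst z * snd w + snd z * fst w).
Definition cconj (z : C) : C := (fst z, - snd z).
Definition cnorm2 (z : C) : R := fst z * fst z + snd z * snd z.

Definition vec := (nat -> C)%type.
Definition vadd (x y : vec) : vec := fun n => (fst (x n) + fst (y n), snd (x n) + snd (y n)).
Definition vsub (x y : vec) : vec := fun n => (fst (x n) - fst (y n), snd (x n) - snd (y n)).
Definition vzero : vec := fun _ => (0, 0).
Definition vscale (c : C) (x : vec) : vec := fun n => cmul c (x n).
Definition rscale (r : R) (x : vec) : vec := vscale (r, 0) x.

Definition sqnorm_is (x : vec) (l : R) : Prop :=
  infinite_sum (fun n => cnorm2 (x n)) l.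
Definition l2 (x : vec) : Prop := exists l, sqnorm_is x l.
(* <x, y> = c  (linear in x, conjugate-linear in y) *)
Definition inner_is (x y : vec) (c : C) : Prop :=
  infinite_sum (fun n => fst (cmul (x n) (cconj (y n)))) (fst c) /\
  infinite_sum (fun n => snd (cmul (x n) (cconj (y n)))) (snd c).

(* operators are functions vec -> vec; only their values on l^2 matter *)
Definition op := (vec -> vec)%type.

Definition rank_one_proj (P : op) : Prop :=
  exists e : vec, sqnorm_is e 1 /\
    forall v, l2 v -> exists c, inner_is v e c /\ P v = vscale c e.

Fixpoint psum (T : nat -> op) (v : vec) (n : nat) : vec :=
  match n with
  | O => vzero
  | S k => vadd (psum T v k) (T k v)
  end.

Definition norm_cv (u : nat -> vec) (w : vec) : Prop :=
  forall eps, eps > 0 -> exists N, forall n, (n >= N)%nat ->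
    exists l, sqnorm_is (vsub (u n) w) l /\ l < eps.

Definition sot_sum (T : nat -> op) (A : op) : Prop :=
  forall v, l2 v -> norm_cv (psum T v) (A v).

Definition Adm (A : op) (xi : nat -> R) : Prop :=
  (forall j, 0 <= xi j) /\ (exists B, forall j, xi j <= B) /\
  exists P : nat -> op, (forall j, rank_one_proj (P j)) /\
    sot_sum (fun j v => rscale (xi j) (P j v)) A.

(* index sets {1..M}, 0 <= M <= infinity; None = infinity (0-based indices) *)
Definition below (j : nat) (M : option nat) : Prop :=
  match M with None => True | Some m => (j < m)%nat end.

Fixpoint fsum (f : nat -> R) (n : nat) : R :=
  match n with O => 0 | S k => fsum f k + f k end.

Definition diverges (mu : nat -> R) (M : option nat) : Prop :=
  forall B, exists n, (forall j, (j < n)%nat -> below j M) /\ B < fsum mu n.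

Definition merges (xi : nat -> R) (mu : nat -> R) (M : option nat)
    (lam : nat -> R) (N : option nat) : Prop :=
  exists s : nat -> (nat + nat)%type,
    (forall k k', s k = s k' -> k = k') /\
    (forall k, match s k with
               | inl j => below j M /\ xi k = mu j
               | inr j => below j N /\ xi k = 1 - lam j
               end) /\
    (forall j, below j M -> exists k, s k = inl j) /\
    (forall j, below j N -> exists k, s k = inr j).

(* The projections F_k with A = sum_k xi_k F_k are built greedily. After k steps the first J of
   the E_j = e_j e_j^* are used up and
     sum_(i < k) xi_i F_i = sum_(j < J) E_j - b g g^*,   0 <= b < 1,  |g| = 1.
   A weight w <= b is paid out of the leftover (F = g, b := b - w). Otherwise b g g^* + E_J, of trace
   1 + b > w and supported on the plane of g and e_J, is written as w F F^* + (1 + b - w) H H^*, and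
   H carries the new leftover.
   For a fixed v the leftover mass b |<v, g>|^2 shrinks by the factor 1 - w/2 at each step whose
   weight w is at most 1/2, up to a multiple of the mass |<v, e_J>|^2 of the newly used E_J. The
   weights mu_j have a divergent sum while sum_j |<v, e_j>|^2 converges, so the leftover mass tends
   to 0; and since the total weight diverges, J tends to infinity. *)

From Stdlib Require Import Reals Lra Lia Psatz FunctionalExtensionality ClassicalEpsilon.
From Coquelicot Require Import Hierarchy Series.
Open Scope R_scope.

Notation ex_series := (@Series.ex_series R_AbsRing R_NormedModule).

Lemma ex_series_Rplus (a b : nat -> R) :
  ex_series a -> ex_series b -> ex_series (fun n => a n + b n).
Proof. exact (@ex_series_plus R_AbsRing R_NormedModule a b). Qed.

Lemma ex_series_Rscal (c : R) (a : nat -> R) :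
  ex_series a -> ex_series (fun n => c * a n).
Proof. exact (@ex_series_scal_l R_AbsRing R_NormedModule c a). Qed.

Lemma ex_series_Rext (a b : nat -> R) :
  (forall n, a n = b n) -> ex_series a -> ex_series b.
Proof. exact (@ex_series_ext R_AbsRing R_NormedModule a b). Qed.

Lemma ex_series_Rbound (a b : nat -> R) :
  (forall n, - b n <= a n <= b n) -> ex_series b -> ex_series a.
Proof.
  intros Hab. apply (@ex_series_le R_AbsRing R_CompleteNormedModule).
  intros n; apply Rabs_le, Hab.
Qed.

Lemma infinite_sum_null (f : nat -> R) : (forall n, f n = 0) -> infinite_sum f 0.
Proof.
  intros Hf e He. exists 0%nat. intros n _.
  rewrite (sum_eq_R0 _ n) by auto. unfold Rdist. rewrite Rminus_0_r, Rabs_R0. lra.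
Qed.

Lemma Series_zero : Series (fun _ => 0) = 0.
Proof. apply is_series_unique, is_series_Reals, infinite_sum_null; reflexivity. Qed.

Lemma Series_le_gen (a b : nat -> R) :
  ex_series a -> ex_series b -> (forall n, a n <= b n) -> Series a <= Series b.
Proof.
  intros Ha Hb Hab.
  assert (Hdiff : 0 <= Series (fun n => b n - a n)).
  { rewrite <- Series_zero. apply Series_le.
    - intros n; specialize (Hab n); lra.
    - apply (ex_series_Rext (fun n => 1 * b n + (-1) * a n)); [intros; ring|].
      apply ex_series_Rplus; apply ex_series_Rscal; assumption. }
  rewrite Series_minus in Hdiff by assumption. lra.
Qed.

Lemma cnorm2_ge0 (z : R * R) : 0 <= cnorm2 z.
Proof. unfold cnorm2; nra. Qed.

Definition sqterm (x : vec) (n : nat) : R := cnorm2 (x n).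
Definition inner_re (x y : vec) (n : nat) : R := fst (cmul (x n) (cconj (y n))).
Definition inner_im (x y : vec) (n : nat) : R := snd (cmul (x n) (cconj (y n))).
Definition inner (x y : vec) : R * R := (Series (inner_re x y), Series (inner_im x y)).
Definition sqnorm (x : vec) : R := Series (sqterm x).
Definition proj (v e : vec) : vec := vscale (inner v e) e.

Lemma l2_ex_series x : l2 x -> ex_series (sqterm x).
Proof. intros [l Hl]. exists l. apply is_series_Reals, Hl. Qed.

Lemma ex_series_l2 x : ex_series (sqterm x) -> l2 x.
Proof. intros [l Hl]. exists l. apply is_series_Reals, Hl. Qed.

Lemma sqnorm_is_sqnorm x : l2 x -> sqnorm_is x (sqnorm x).
Proof. intros H. apply is_series_Reals, Series_correct, l2_ex_series, H. Qed.

Lemma sqnorm_is_unique x l : sqnorm_is x l -> sqnorm x = l.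
Proof. intros H. apply is_series_unique, is_series_Reals, H. Qed.

Lemma unit_l2 x : sqnorm_is x 1 -> l2 x.
Proof. intros H. exists 1; exact H. Qed.

Lemma l2_sqnorm1 x : l2 x -> sqnorm x = 1 -> sqnorm_is x 1.
Proof. intros Lx Nx. rewrite <- Nx. apply sqnorm_is_sqnorm, Lx. Qed.

Lemma ex_series_sqterm_mid x y :
  l2 x -> l2 y -> ex_series (fun n => (sqterm x n + sqterm y n) / 2).
Proof.
  intros Lx Ly. apply (ex_series_Rext (fun n => /2 * sqterm x n + /2 * sqterm y n)).
  - intros n; field.
  - apply ex_series_Rplus; apply ex_series_Rscal, l2_ex_series; assumption.
Qed.

Lemma inner_re_bound x y n :
  - ((sqterm x n + sqterm y n) / 2) <= inner_re x y n <= (sqterm x n + sqterm y n) / 2.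
Proof.
  unfold inner_re, sqterm, cnorm2, cmul, cconj.
  destruct (x n) as [a b], (y n) as [c d]; simpl.
  pose proof (Rle_0_sqr (a + c)); pose proof (Rle_0_sqr (a - c));
  pose proof (Rle_0_sqr (b + d)); pose proof (Rle_0_sqr (b - d)); unfold Rsqr in *. lra.
Qed.

Lemma inner_im_bound x y n :
  - ((sqterm x n + sqterm y n) / 2) <= inner_im x y n <= (sqterm x n + sqterm y n) / 2.
Proof.
  unfold inner_im, sqterm, cnorm2, cmul, cconj.
  destruct (x n) as [a b], (y n) as [c d]; simpl.
  pose proof (Rle_0_sqr (a + d)); pose proof (Rle_0_sqr (a - d));
  pose proof (Rle_0_sqr (b + c)); pose proof (Rle_0_sqr (b - c)); unfold Rsqr in *. lra.
Qed.

Lemma ex_series_inner_re x y : l2 x -> l2 y -> ex_series (inner_re x y).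
Proof.
  intros. eapply ex_series_Rbound; [apply inner_re_bound | apply ex_series_sqterm_mid; auto].
Qed.

Lemma ex_series_inner_im x y : l2 x -> l2 y -> ex_series (inner_im x y).
Proof.
  intros. eapply ex_series_Rbound; [apply inner_im_bound | apply ex_series_sqterm_mid; auto].
Qed.

Lemma inner_is_inner x y : l2 x -> l2 y -> inner_is x y (inner x y).
Proof.
  intros. split; apply is_series_Reals, Series_correct;
    [apply ex_series_inner_re | apply ex_series_inner_im]; auto.
Qed.

Lemma inner_is_unique v e c : l2 v -> l2 e -> inner_is v e c -> c = inner v e.
Proof.
  intros _ _ [H1 H2]. destruct c as [c1 c2]. unfold inner; simpl in *.
  f_equal; symmetry; apply is_series_unique, is_series_Reals; assumption.
Qed.

Lemma l2_dominated x y : l2 y -> (forall n, sqterm x n <= sqterm y n) -> l2 x.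
Proof.
  intros Ly Hxy. apply ex_series_l2. eapply ex_series_Rbound; [|apply l2_ex_series, Ly].
  intros n. pose proof (cnorm2_ge0 (x n)). specialize (Hxy n). unfold sqterm in *. lra.
Qed.

Lemma l2_vadd x y : l2 x -> l2 y -> l2 (vadd x y).
Proof.
  intros Lx Ly. apply ex_series_l2.
  eapply ex_series_Rbound with (fun n => 2 * sqterm x n + 2 * sqterm y n).
  - intros n. unfold sqterm, cnorm2, vadd; destruct (x n) as [a b], (y n) as [c d]; simpl.
    pose proof (Rle_0_sqr (a - c)); pose proof (Rle_0_sqr (b - d));
    pose proof (Rle_0_sqr (a + c)); pose proof (Rle_0_sqr (b + d)); unfold Rsqr in *. lra.
  - apply ex_series_Rplus; apply ex_series_Rscal, l2_ex_series; assumption.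
Qed.

Lemma l2_vscale c x : l2 x -> l2 (vscale c x).
Proof.
  intros Lx. apply ex_series_l2.
  eapply ex_series_Rbound with (fun n => cnorm2 c * sqterm x n).
  - intros n. unfold sqterm, cnorm2, vscale, cmul; destruct c as [a b], (x n) as [c d]; simpl.
    pose proof (Rle_0_sqr (a * c - b * d)); pose proof (Rle_0_sqr (a * d + b * c));
    unfold Rsqr in *. split; nra.
  - apply ex_series_Rscal, l2_ex_series, Lx.
Qed.

Lemma l2_vsub x y : l2 x -> l2 y -> l2 (vsub x y).
Proof.
  intros Lx Ly. apply (l2_dominated _ (vadd x (vscale (-1, 0) y))).
  - apply l2_vadd, l2_vscale; assumption.
  - intros n. unfold sqterm, vsub, vadd, vscale, cmul, cnorm2; simpl. lra.
Qed.

Lemma l2_vzero : l2 vzero.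
Proof.
  exists 0. apply infinite_sum_null. intros n. unfold vzero, cnorm2; simpl; ring.
Qed.

Lemma Series_lincomb (a b : R) (f g : nat -> R) : ex_series f -> ex_series g ->
  Series (fun n => a * f n + b * g n) = a * Series f + b * Series g.
Proof.
  intros Hf Hg. rewrite Series_plus, !Series_scal_l by (apply ex_series_Rscal; assumption).
  reflexivity.
Qed.

Lemma inner_addl x y z : l2 x -> l2 y -> l2 z ->
  inner (vadd x y) z = (fst (inner x z) + fst (inner y z), snd (inner x z) + snd (inner y z)).
Proof.
  intros. unfold inner; simpl.
  f_equal; rewrite <- Series_plus by (apply ex_series_inner_re || apply ex_series_inner_im; auto);
    apply Series_ext; intros n; unfold inner_re, inner_im, vadd, cmul, cconj; simpl; ring.
Qed.

Lemma inner_scalel a x z : l2 x -> l2 z -> inner (vscale a x) z = cmul a (inner x z).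
Proof.
  intros. unfold inner, cmul at 1; simpl. f_equal.
  - replace (fst a * Series (inner_re x z) - snd a * Series (inner_im x z))
      with (fst a * Series (inner_re x z) + (- snd a) * Series (inner_im x z)) by ring.
    rewrite <- Series_lincomb by (apply ex_series_inner_re || apply ex_series_inner_im; auto).
    apply Series_ext; intros n; unfold inner_re, inner_im, vscale, cmul, cconj; simpl; ring.
  - rewrite <- Series_lincomb by (apply ex_series_inner_re || apply ex_series_inner_im; auto).
    apply Series_ext; intros n; unfold inner_re, inner_im, vscale, cmul, cconj; simpl; ring.
Qed.

Lemma inner_conj x y : inner y x = cconj (inner x y).
Proof.
  unfold inner, cconj; simpl. f_equal.
  - apply Series_ext; intros n; unfold inner_re; simpl; ring.
  - rewrite <- Series_opp. apply Series_ext; intros n; unfold inner_im; simpl; ring.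
Qed.

Lemma inner_scaler a x z : l2 x -> l2 z -> inner z (vscale a x) = cmul (cconj a) (inner z x).
Proof.
  intros. rewrite (inner_conj (vscale a x)), inner_scalel, (inner_conj z x) by assumption.
  unfold cconj, cmul; simpl. f_equal; ring.
Qed.

Lemma inner_self x : l2 x -> inner x x = (sqnorm x, 0).
Proof.
  intros. unfold inner, sqnorm. f_equal.
  - apply Series_ext; intros n; unfold inner_re, sqterm, cnorm2, cmul, cconj; simpl; ring.
  - rewrite <- Series_zero. apply Series_ext; intros n; unfold inner_im; simpl; ring.
Qed.

Lemma inner_vzero_l y : inner vzero y = (0, 0).
Proof.
  unfold inner. f_equal; rewrite <- Series_zero; apply Series_ext; intros;
    unfold inner_re, inner_im, vzero, cmul; simpl; ring.
Qed.

Lemma inner_real_comb a b x y v : l2 x -> l2 y -> l2 v ->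
  inner v (vadd (vscale (a, 0) x) (vscale (b, 0) y)) =
  (a * fst (inner v x) + b * fst (inner v y), a * snd (inner v x) + b * snd (inner v y)).
Proof.
  intros. rewrite (inner_conj (vadd _ _)), inner_addl by (try apply l2_vscale; assumption).
  rewrite !inner_scalel, (inner_conj x), (inner_conj y) by assumption.
  unfold cmul, cconj; simpl. f_equal; ring.
Qed.

Lemma sqnorm_ge0 x : l2 x -> 0 <= sqnorm x.
Proof.
  intros. unfold sqnorm. rewrite <- Series_zero.
  apply Series_le; [intros; split; [lra | apply cnorm2_ge0] | apply l2_ex_series; assumption].
Qed.

Lemma sqnorm_eq0 x : l2 x -> sqnorm x = 0 -> forall n, x n = (0, 0).
Proof.
  intros Lx H0 n. pose proof (sqnorm_is_sqnorm x Lx) as S. rewrite H0 in S.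
  assert (Hn : sqterm x n <= sum_f_R0 (sqterm x) n).
  { destruct n; simpl; [lra|].
    pose proof (cond_pos_sum (sqterm x) n (fun k => cnorm2_ge0 (x k))). lra. }
  pose proof (sum_incr (sqterm x) n 0 S (fun k => cnorm2_ge0 (x k))).
  unfold sqterm, cnorm2 in *. destruct (x n) as [a b]; simpl in *. f_equal; nra.
Qed.

Lemma sqnorm_vadd x y : l2 x -> l2 y ->
  sqnorm (vadd x y) = sqnorm x + sqnorm y + 2 * fst (inner x y).
Proof.
  intros. unfold sqnorm, inner; simpl. rewrite <- (Series_scal_l 2).
  rewrite <- (Series_plus (sqterm x)) by (apply l2_ex_series; assumption).
  rewrite <- Series_plus
    by (apply ex_series_Rplus || apply ex_series_Rscal; (apply l2_ex_series || apply ex_series_inner_re); auto).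
  apply Series_ext; intros n; unfold sqterm, inner_re, vadd, cnorm2, cmul, cconj; simpl; ring.
Qed.

Lemma sqnorm_vscale c x : l2 x -> sqnorm (vscale c x) = cnorm2 c * sqnorm x.
Proof.
  intros. unfold sqnorm. rewrite <- Series_scal_l.
  apply Series_ext; intros n; unfold sqterm, vscale, cnorm2, cmul; simpl; ring.
Qed.

Lemma sqnorm_vsub_le x y : l2 x -> l2 y -> sqnorm (vsub x y) <= 2 * sqnorm x + 2 * sqnorm y.
Proof.
  intros. unfold sqnorm. rewrite <- !Series_scal_l, <- Series_plus
    by (apply ex_series_Rscal, l2_ex_series; assumption).
  apply Series_le.
  - intros n; split; [apply cnorm2_ge0|].
    unfold sqterm, vsub, cnorm2; destruct (x n) as [a b], (y n) as [c d]; simpl.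
    pose proof (Rle_0_sqr (a + c)); pose proof (Rle_0_sqr (b + d)); unfold Rsqr in *. lra.
  - apply ex_series_Rplus; apply ex_series_Rscal, l2_ex_series; assumption.
Qed.

Lemma inner_re_le_mid x y : l2 x -> l2 y -> fst (inner x y) <= (sqnorm x + sqnorm y) / 2.
Proof.
  intros. unfold inner, sqnorm; simpl.
  replace ((Series (sqterm x) + Series (sqterm y)) / 2)
    with (Series (fun n => (sqterm x n + sqterm y n) / 2)).
  - apply Series_le_gen; [apply ex_series_inner_re | apply ex_series_sqterm_mid |]; auto.
    intros n; apply inner_re_bound.
  - rewrite <- Series_plus by (apply l2_ex_series; assumption).
    unfold Rdiv. rewrite Rmult_comm, <- Series_scal_l.
    apply Series_ext; intros n; ring.
Qed.

Lemma vadd_vsub_exchange a b c d e : vadd a b = vadd c d -> vadd (vsub e a) c = vsub (vadd e b) d.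
Proof.
  intros Habcd. apply functional_extensionality; intros n.
  apply (f_equal (fun f => f n)) in Habcd. unfold vadd, vsub in *.
  destruct (a n), (b n), (c n), (d n), (e n); simpl in *. injection Habcd as H1 H2. f_equal; lra.
Qed.

Lemma unit_phase_proj (ph : R * R) q v : cnorm2 ph = 1 -> l2 q -> l2 v ->
  proj v (vscale ph q) = proj v q /\ cnorm2 (inner v (vscale ph q)) = cnorm2 (inner v q).
Proof.
  intros Hph Lq Lv. unfold proj. rewrite inner_scaler by assumption.
  destruct ph as [p1 p2], (inner v q) as [x y]; unfold cnorm2 in *; simpl in *. split.
  - apply functional_extensionality; intros n. unfold vscale, cmul, cconj; simpl.
    destruct (q n) as [z t]; simpl. f_equal.
    + transitivity ((p1 * p1 + p2 * p2) * (x * z - y * t)); [ring | rewrite Hph; ring].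
    + transitivity ((p1 * p1 + p2 * p2) * (x * t + y * z)); [ring | rewrite Hph; ring].
  - transitivity ((p1 * p1 + p2 * p2) * (x * x + y * y)); [ring | rewrite Hph; ring].
Qed.

Lemma phase_align g q : l2 g -> sqnorm_is q 1 ->
  exists q' m, sqnorm_is q' 1 /\ 0 <= m /\ inner g q' = (m, 0) /\
    forall v, l2 v -> proj v q' = proj v q /\ cnorm2 (inner v q') = cnorm2 (inner v q).
Proof.
  intros Lg Hq. pose proof (unit_l2 _ Hq) as Lq.
  destruct (inner g q) as [a b] eqn:Egq.
  set (m := sqrt (a * a + b * b)).
  assert (Hm2 : m * m = a * a + b * b) by (apply sqrt_sqrt; nra).
  assert (Hm0 : 0 <= m) by apply sqrt_pos.
  destruct (Req_dec m 0) as [Hm | Hm].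
  - assert (a = 0 /\ b = 0) as [-> ->] by (rewrite Hm in Hm2; split; nra).
    exists q, 0. repeat split; auto; lra.
  - set (ph := (a / m, b / m)).
    assert (Hph : cnorm2 ph = 1).
    { unfold cnorm2, ph; simpl.
      replace (a / m * (a / m) + b / m * (b / m)) with ((a * a + b * b) / (m * m)) by (field; lra).
      rewrite <- Hm2. field. lra. }
    exists (vscale ph q), m. split; [|split; [exact Hm0 | split]].
    + apply l2_sqnorm1; [apply l2_vscale, Lq|].
      rewrite sqnorm_vscale, Hph, (sqnorm_is_unique _ _ Hq) by assumption. ring.
    + rewrite inner_scaler, Egq by assumption. unfold cmul, cconj, ph; simpl. f_equal.
      * replace (a / m * a - - (b / m) * b) with ((a * a + b * b) / m) by (field; lra).
        rewrite <- Hm2. field. lra.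
      * field. lra.
    + intros v Lv. apply unit_phase_proj; assumption.
Qed.

Lemma orthogonal_split g q c : sqnorm_is g 1 -> sqnorm_is q 1 -> inner g q = (c, 0) ->
  exists u d, l2 u /\ inner u q = (0, 0) /\ (0 < d -> sqnorm u = 1) /\
    0 <= d /\ c * c + d * d = 1 /\ g = vadd (vscale (c, 0) q) (vscale (d, 0) u).
Proof.
  intros Hg Hq Egq. pose proof (unit_l2 _ Hg) as Lg. pose proof (unit_l2 _ Hq) as Lq.
  set (w := vadd g (vscale (- c, 0) q)).
  assert (Lw : l2 w) by (apply l2_vadd, l2_vscale; assumption).
  assert (Nw : sqnorm w = 1 - c * c).
  { unfold w. rewrite sqnorm_vadd, sqnorm_vscale, inner_scaler, Egq by (try apply l2_vscale; assumption).
    rewrite (sqnorm_is_unique _ _ Hg), (sqnorm_is_unique _ _ Hq).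
    unfold cnorm2, cmul, cconj; simpl. ring. }
  assert (Hc1 : c * c <= 1) by (pose proof (sqnorm_ge0 _ Lw); lra).
  set (d := sqrt (1 - c * c)).
  assert (Hd2 : d * d = 1 - c * c) by (apply sqrt_sqrt; lra).
  assert (Hd0 : 0 <= d) by apply sqrt_pos.
  assert (Ewq : inner w q = (0, 0)).
  { unfold w. rewrite inner_addl, inner_scalel, Egq, inner_self, (sqnorm_is_unique _ _ Hq)
      by (try apply l2_vscale; assumption).
    unfold cmul; simpl. f_equal; ring. }
  destruct (Req_dec d 0) as [Hd | Hd].
  - exists vzero, d. repeat split; auto using l2_vzero, inner_vzero_l; try lra.
    apply functional_extensionality; intros n.
    assert (Hwn : w n = (0, 0)) by (apply sqnorm_eq0; [assumption | rewrite Nw; nra]).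
    unfold w, vadd, vscale, cmul, vzero in *; simpl in *.
    destruct (g n), (q n); simpl in *. injection Hwn as H1 H2. f_equal; nra.
  - exists (vscale (/ d, 0) w), d. repeat split.
    + apply l2_vscale, Lw.
    + rewrite inner_scalel, Ewq by assumption. unfold cmul; simpl. f_equal; ring.
    + intros _. rewrite sqnorm_vscale, Nw by assumption. unfold cnorm2; simpl.
      rewrite <- Hd2. field. exact Hd.
    + exact Hd0.
    + lra.
    + apply functional_extensionality; intros n.
      unfold w, vadd, vscale, cmul; simpl. destruct (g n), (q n); simpl. f_equal; field; exact Hd.
Qed.

Lemma psd_rank_one_factor x y z s : 0 < x -> 0 < s -> x * z = y * y ->
  exists h1 h2, s * h1 * h1 = x /\ s * h1 * h2 = y /\ s * h2 * h2 = z.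
Proof.
  intros Hx Hs Hdet.
  set (h1 := sqrt (x / s)).
  assert (Hh1 : h1 * h1 = x / s) by (apply sqrt_sqrt, Rle_mult_inv_pos; lra).
  assert (Hh1p : 0 < h1) by (apply sqrt_lt_R0, Rdiv_lt_0_compat; lra).
  exists h1, (y / (s * h1)). split; [|split].
  - rewrite Rmult_assoc, Hh1. field. lra.
  - field. lra.
  - replace (s * (y / (s * h1)) * (y / (s * h1))) with (y * y / (s * (h1 * h1))) by (field; lra).
    rewrite Hh1, <- Hdet. field. lra.
Qed.

(* [[al c^2 + 1, al c d], [al c d, al d^2]] is the matrix of al g g^* + q q^* in an orthonormal basis
   (q, u) with g = c q + d u. The unit vector f is taken on the ray (c + t, d), t >= 0, so that this
   matrix minus w f f^T is singular; this is the quadratic a t^2 + 2 al c t = w - al, a = al (1 - w). *)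
Lemma split_direction c d al w : 0 <= c -> 0 < d -> c * c + d * d = 1 -> 0 < al -> al < w -> w < 1 ->
  exists f1 f2, f1 * f1 + f2 * f2 = 1 /\
    w * (al * (d * f1 - c * f2) * (d * f1 - c * f2) + f2 * f2) = al * d * d /\
    al * (1 - w) * (d * d) <= w * (f2 * f2).
Proof.
  intros Hc Hd Hcd Hal Hw Hw1.
  set (a := al * (1 - w)). assert (Ha : 0 < a) by (unfold a; nra).
  set (D := al * al * c * c + a * (w - al)).
  assert (HD : 0 <= D) by (unfold D; assert (0 <= a * (w - al)) by nra; nra).
  set (sD := sqrt D).
  assert (HsD : sD * sD = D) by (apply sqrt_sqrt, HD).
  assert (HsDc : al * c <= sD).
  { apply Rsqr_incr_0_var; [unfold Rsqr; rewrite HsD; unfold D; nra | apply sqrt_pos]. }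
  set (t := (sD - al * c) / a).
  assert (Ht : 0 <= t) by (apply Rle_mult_inv_pos; lra).
  assert (Hq : a * t * t + 2 * al * c * t = w - al).
  { assert (Hat : a * t = sD - al * c) by (unfold t; field; lra).
    assert ((sD + al * c) * t = w - al).
    { unfold t. replace ((sD + al * c) * ((sD - al * c) / a)) with ((sD * sD - al * c * (al * c)) / a)
        by (field; lra).
      rewrite HsD. unfold D. field. lra. }
    nra. }
  set (N2 := 1 + 2 * c * t + t * t).
  assert (HN2 : 0 < N2) by (unfold N2; nra).
  set (N := sqrt N2).
  assert (HN : N * N = N2) by (apply sqrt_sqrt; lra).
  assert (HNp : 0 < N) by (apply sqrt_lt_R0, HN2).
  assert (Hwt : w * (al * t * t + 1) = al * N2) by (unfold N2, a in *; nra).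
  exists ((c + t) / N), (d / N). split; [|split].
  - replace ((c + t) / N * ((c + t) / N) + d / N * (d / N)) with (((c + t) * (c + t) + d * d) / N2)
      by (rewrite <- HN; field; lra).
    replace ((c + t) * (c + t) + d * d) with N2 by (unfold N2; nra). field; lra.
  - replace (w * (al * (d * ((c + t) / N) - c * (d / N)) * (d * ((c + t) / N) - c * (d / N))
      + d / N * (d / N))) with (d * d * (w * (al * t * t + 1)) / (N * N)) by (field; lra).
    rewrite Hwt, HN. field. lra.
  - replace (w * (d / N * (d / N))) with (d * d * (w / N2)) by (rewrite <- HN; field; lra).
    rewrite Rmult_comm. apply Rmult_le_compat_l; [nra|].
    apply (Rmult_le_reg_r N2); [exact HN2|]. replace (w / N2 * N2) with w by (field; lra).
    replace (a * N2) with ((1 - w) * (w * (al * t * t + 1))) by (rewrite Hwt; unfold a; ring).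
    assert (0 <= al * c * t) by (apply Rmult_le_pos; [apply Rmult_le_pos|]; lra).
    assert (0 <= w * (w - a * t * t)) by (apply Rmult_le_pos; lra).
    unfold a in *. lra.
Qed.

Lemma split_rank_two c d al w : 0 <= c -> 0 <= d -> c * c + d * d = 1 -> 0 <= al -> al < w -> w < 1 ->
  exists f1 f2 h1 h2,
    f1 * f1 + f2 * f2 = 1 /\ h1 * h1 + h2 * h2 = 1 /\
    al * c * c + 1 = w * f1 * f1 + (1 + al - w) * h1 * h1 /\
    al * c * d = w * f1 * f2 + (1 + al - w) * h1 * h2 /\
    al * d * d = w * f2 * f2 + (1 + al - w) * h2 * h2 /\
    (1 + al - w) * h2 * h2 <= w * al * d * d /\
    (d = 0 -> f2 = 0 /\ h2 = 0).
Proof.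
  intros Hc Hd Hcd Hal Hw Hw1.
  destruct (Req_dec (al * d) 0) as [H0 | H0].
  { exists 1, 0, 1, 0.
    assert (al = 0 \/ d = 0) as [-> | ->] by (apply Rmult_integral, H0).
    - repeat split; try ring; try (intros; lra); nra.
    - assert (c * c = 1) by nra. repeat split; try ring; try (intros; lra); nra. }
  assert (Hal' : 0 < al) by (destruct Hal as [| <-]; [assumption | rewrite Rmult_0_l in H0; lra]).
  assert (Hd' : 0 < d) by (destruct Hd as [| <-]; [assumption | rewrite Rmult_0_r in H0; lra]).
  destruct (split_direction c d al w Hc Hd' Hcd Hal' Hw Hw1) as (f1 & f2 & Hf & Hsing & Hf2).
  set (s := 1 + al - w).
  destruct (psd_rank_one_factor (al * c * c + 1 - w * f1 * f1) (al * c * d - w * f1 * f2)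
              (al * d * d - w * f2 * f2) s) as (h1 & h2 & E1 & E2 & E3).
  { pose proof (Rle_0_sqr f2); pose proof (Rle_0_sqr c); unfold Rsqr in *. nra. }
  { unfold s; lra. }
  { nra. }
  exists f1, f2, h1, h2. repeat split; try lra.
  apply (Rmult_eq_reg_l s); [|unfold s; lra].
  replace (s * (h1 * h1 + h2 * h2)) with (s * h1 * h1 + s * h2 * h2) by ring.
  rewrite E1, E3. unfold s. nra.
Qed.

Lemma split_quadratic_form c d al w s f1 f2 h1 h2 x y :
    al * c * c + 1 = w * f1 * f1 + s * h1 * h1 ->
    al * c * d = w * f1 * f2 + s * h1 * h2 ->
    al * d * d = w * f2 * f2 + s * h2 * h2 ->
  al * (c * x + d * y) * (c * x + d * y) + x * x
  = w * (f1 * x + f2 * y) * (f1 * x + f2 * y) + s * (h1 * x + h2 * y) * (h1 * x + h2 * y).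
Proof.
  intros E1 E2 E3.
  transitivity ((al * c * c + 1) * x * x + 2 * (al * c * d) * x * y + (al * d * d) * y * y); [ring|].
  rewrite E1, E2, E3. ring.
Qed.

(* The component of h along the new direction is small (s h2^2 <= w al d^2 <= al d^2 / 2), so the
   new leftover is at most 3/4 of the old one up to a multiple of the newly consumed mass x^2. *)
Lemma split_remainder_bound c d al w s h1 h2 x y :
  0 <= al <= 1/2 -> 0 < w <= 1/2 -> 0 < s <= 3/2 -> h1 * h1 + h2 * h2 = 1 ->
  s * h2 * h2 <= w * al * d * d -> c * c + d * d = 1 ->
  s * (h1 * x + h2 * y) * (h1 * x + h2 * y) <= 3/4 * al * (c * x + d * y) * (c * x + d * y) + 11 * (x * x).
Proof.
  intros Hal Hw Hs Hh Hdec Hcd.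
  set (a := h1 * x). set (b := h2 * y).
  assert (Hab : (a + b) * (a + b) <= 6/5 * (b * b) + 6 * (a * a)).
  { pose proof (Rle_0_sqr (5 * a - b)). unfold Rsqr in *. lra. }
  assert (Hb : s * (b * b) <= w * al * (d * y) * (d * y)).
  { unfold b. replace (s * (h2 * y * (h2 * y))) with ((s * h2 * h2) * (y * y)) by ring.
    replace (w * al * (d * y) * (d * y)) with ((w * al * d * d) * (y * y)) by ring.
    apply Rmult_le_compat_r; [apply Rle_0_sqr | exact Hdec]. }
  assert (Ha : s * (a * a) <= 3/2 * (x * x)).
  { unfold a. replace (s * (h1 * x * (h1 * x))) with ((s * (h1 * h1)) * (x * x)) by ring.
    apply Rmult_le_compat_r; [apply Rle_0_sqr|].
    pose proof (Rle_0_sqr h1); pose proof (Rle_0_sqr h2); unfold Rsqr in *. nra. }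
  assert (Hcx : (c * x + d * y) * (c * x + d * y) >= 4/5 * ((d * y) * (d * y)) - 4 * ((c * x) * (c * x))).
  { pose proof (Rle_0_sqr (5 * (c * x) + d * y)). unfold Rsqr in *. lra. }
  assert (Hc2 : al * ((c * x) * (c * x)) <= 1/2 * (x * x)).
  { replace ((c * x) * (c * x)) with ((c * c) * (x * x)) by ring.
    pose proof (Rle_0_sqr c); pose proof (Rle_0_sqr d); pose proof (Rle_0_sqr x); unfold Rsqr in *. nra. }
  assert (Hdy : 0 <= (d * y) * (d * y)) by apply Rle_0_sqr.
  assert (H1 : s * ((a + b) * (a + b)) <= s * (6/5 * (b * b) + 6 * (a * a))) by (apply Rmult_le_compat_l; lra).
  assert (H2 : w * al * ((d * y) * (d * y)) <= 1/2 * al * ((d * y) * (d * y))) by (apply Rmult_le_compat_r; nra).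
  assert (H3 : al * (4/5 * ((d * y) * (d * y)) - 4 * ((c * x) * (c * x)))
               <= al * ((c * x + d * y) * (c * x + d * y))) by (apply Rmult_le_compat_l; lra).
  replace (s * (h1 * x + h2 * y) * (h1 * x + h2 * y)) with (s * ((a + b) * (a + b))) by (unfold a, b; ring).
  replace (3/4 * al * (c * x + d * y) * (c * x + d * y)) with (3/4 * (al * ((c * x + d * y) * (c * x + d * y))))
    by ring.
  replace (w * al * (d * y) * (d * y)) with (w * al * ((d * y) * (d * y))) in Hb by ring.
  clear -H1 H2 H3 Hb Ha Hc2. clearbody a b. nra.
Qed.

Lemma sqnorm_real_comb_orth a b x y : l2 x -> l2 y -> inner y x = (0, 0) ->
  sqnorm (vadd (vscale (a, 0) x) (vscale (b, 0) y)) = a * a * sqnorm x + b * b * sqnorm y.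
Proof.
  intros Lx Ly Hxy. rewrite sqnorm_vadd, !sqnorm_vscale by (try apply l2_vscale; assumption).
  rewrite inner_scalel, inner_scaler, (inner_conj y x), Hxy by (try apply l2_vscale; assumption).
  unfold cnorm2, cmul, cconj; simpl. ring.
Qed.

Lemma proj_real_comb_split c d al w s f1 f2 h1 h2 q u v : l2 q -> l2 u -> l2 v ->
    al * c * c + 1 = w * f1 * f1 + s * h1 * h1 ->
    al * c * d = w * f1 * f2 + s * h1 * h2 ->
    al * d * d = w * f2 * f2 + s * h2 * h2 ->
  vadd (rscale al (proj v (vadd (vscale (c, 0) q) (vscale (d, 0) u)))) (proj v q)
  = vadd (rscale w (proj v (vadd (vscale (f1, 0) q) (vscale (f2, 0) u))))
         (rscale s (proj v (vadd (vscale (h1, 0) q) (vscale (h2, 0) u)))).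
Proof.
  intros Lq Lu Lv E1 E2 E3. apply functional_extensionality; intros n.
  unfold proj. rewrite !inner_real_comb by assumption.
  destruct (inner v q) as [x1 y1], (inner v u) as [x2 y2].
  unfold vadd, vscale, rscale, cmul; simpl.
  destruct (q n) as [p1 p2], (u n) as [r1 r2]; simpl. f_equal.
  - transitivity ((al * c * c + 1) * (x1 * p1 - y1 * p2)
      + (al * c * d) * ((x1 * r1 - y1 * r2) + (x2 * p1 - y2 * p2)) + (al * d * d) * (x2 * r1 - y2 * r2));
      [ring | rewrite E1, E2, E3; ring].
  - transitivity ((al * c * c + 1) * (x1 * p2 + y1 * p1)
      + (al * c * d) * ((x1 * r2 + y1 * r1) + (x2 * p2 + y2 * p1)) + (al * d * d) * (x2 * r2 + y2 * r1));
      [ring | rewrite E1, E2, E3; ring].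
Qed.

Lemma split_step g q al w : sqnorm_is g 1 -> sqnorm_is q 1 -> 0 <= al -> al < w -> w < 1 ->
  exists F H, sqnorm_is F 1 /\ sqnorm_is H 1 /\
    (forall v, l2 v -> vadd (rscale al (proj v g)) (proj v q)
                      = vadd (rscale w (proj v F)) (rscale (1 + al - w) (proj v H))) /\
    (forall v, l2 v -> (1 + al - w) * cnorm2 (inner v H)
                      <= al * cnorm2 (inner v g) + cnorm2 (inner v q)) /\
    (w <= 1/2 -> forall v, l2 v -> (1 + al - w) * cnorm2 (inner v H)
                      <= 3/4 * (al * cnorm2 (inner v g)) + 11 * cnorm2 (inner v q)).
Proof.
  intros Hg Hq Hal Hw Hw1.
  destruct (phase_align g q (unit_l2 _ Hg) Hq) as (q' & c & Hq' & Hc & Egq' & Hphase).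
  destruct (orthogonal_split g q' c Hg Hq' Egq') as (u & d & Lu & Ouq & Nu & Hd & Hcd & Eg).
  destruct (split_rank_two c d al w Hc Hd Hcd Hal Hw Hw1)
    as (f1 & f2 & h1 & h2 & Hf & Hh & E1 & E2 & E3 & Hsmall & Hd0).
  set (s := 1 + al - w) in *.
  pose proof (unit_l2 _ Hq') as Lq'.
  assert (Hunit : forall a b, a * a + b * b = 1 -> (d = 0 -> b = 0) ->
                    sqnorm_is (vadd (vscale (a, 0) q') (vscale (b, 0) u)) 1).
  { intros a b Hab Hb. apply l2_sqnorm1; [apply l2_vadd; apply l2_vscale; assumption|].
    rewrite sqnorm_real_comb_orth, (sqnorm_is_unique _ _ Hq') by assumption.
    destruct (Req_dec d 0) as [D0 | D0].
    - rewrite (Hb D0) in *. lra.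
    - rewrite Nu by (destruct Hd; [assumption | congruence]). lra. }
  exists (vadd (vscale (f1, 0) q') (vscale (f2, 0) u)), (vadd (vscale (h1, 0) q') (vscale (h2, 0) u)).
  split; [|split; [|split; [|split]]].
  - apply Hunit; [exact Hf | intros; apply Hd0; assumption].
  - apply Hunit; [exact Hh | intros; apply Hd0; assumption].
  - intros v Lv. destruct (Hphase v Lv) as [<- _]. rewrite Eg.
    apply proj_real_comb_split; assumption.
  - intros v Lv. destruct (Hphase v Lv) as [_ <-].
    rewrite Eg, !inner_real_comb by assumption.
    destruct (inner v q') as [x1 y1], (inner v u) as [x2 y2]. unfold cnorm2; simpl.
    pose proof (split_quadratic_form c d al w s f1 f2 h1 h2 x1 x2 E1 E2 E3).
    pose proof (split_quadratic_form c d al w s f1 f2 h1 h2 y1 y2 E1 E2 E3).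
    assert (0 <= w * ((f1 * x1 + f2 * x2) * (f1 * x1 + f2 * x2))) by (apply Rmult_le_pos; [lra | apply Rle_0_sqr]).
    assert (0 <= w * ((f1 * y1 + f2 * y2) * (f1 * y1 + f2 * y2))) by (apply Rmult_le_pos; [lra | apply Rle_0_sqr]).
    nra.
  - intros Hw2 v Lv. destruct (Hphase v Lv) as [_ <-].
    rewrite Eg, !inner_real_comb by assumption.
    destruct (inner v q') as [x1 y1], (inner v u) as [x2 y2]. unfold cnorm2; simpl.
    assert (Hs : 0 < s <= 3/2) by (unfold s; lra).
    pose proof (split_remainder_bound c d al w s h1 h2 x1 x2 ltac:(lra) ltac:(lra) Hs Hh Hsmall Hcd).
    pose proof (split_remainder_bound c d al w s h1 h2 y1 y2 ltac:(lra) ltac:(lra) Hs Hh Hsmall Hcd).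
    nra.
Qed.

Lemma fsum_le_mono f k k' : (forall i, 0 <= f i) -> (k <= k')%nat -> fsum f k <= fsum f k'.
Proof. intros Hf Hk. induction Hk as [|k' _ IH]; simpl; [lra | specialize (Hf k'); lra]. Qed.

Lemma fsum_le f g k : (forall i, f i <= g i) -> fsum f k <= fsum g k.
Proof. intros Hfg. induction k as [|k IH]; simpl; [lra | specialize (Hfg k); lra]. Qed.

Lemma fsum_ext f g k : (forall i, f i = g i) -> fsum f k = fsum g k.
Proof. intros Hfg. induction k as [|k IH]; simpl; [reflexivity | rewrite IH, Hfg; reflexivity]. Qed.

Lemma fsum_null f k : (forall i, f i = 0) -> fsum f k = 0.
Proof. intros Hf. induction k as [|k IH]; simpl; [reflexivity | rewrite IH, Hf; ring]. Qed.

Lemma fsum_plus f g k : fsum (fun i => f i + g i) k = fsum f k + fsum g k.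
Proof. induction k as [|k IH]; simpl; [ring | rewrite IH; ring]. Qed.

Lemma fsum_indicator i0 c k : (i0 < k)%nat -> fsum (fun i => if Nat.eq_dec i i0 then c else 0) k = c.
Proof.
  assert (Hlow : forall m, (m <= i0)%nat -> fsum (fun i => if Nat.eq_dec i i0 then c else 0) m = 0).
  { induction m as [|m IH]; intros Hm; simpl; [reflexivity|].
    destruct (Nat.eq_dec m i0); [lia | rewrite IH by lia; ring]. }
  induction k as [|k IH]; intros Hk; [lia|]. simpl. destruct (Nat.eq_dec k i0) as [-> | Hne].
  - rewrite Hlow by lia. ring.
  - rewrite IH by lia. ring.
Qed.

Lemma fsum_bounded_cauchy f B : (forall i, 0 <= f i) -> (forall k, fsum f k <= B) ->
  forall eps, eps > 0 -> exists K, forall k k', (K <= k)%nat -> (k <= k')%nat -> fsum f k' - fsum f k < eps.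
Proof.
  intros Hf HB eps Heps.
  assert (Hcv : Cauchy_crit (fsum f)).
  { apply CV_Cauchy, growing_cv.
    - intros n; simpl. specialize (Hf n); lra.
    - exists B. intros x [i ->]. apply HB. }
  destruct (Hcv eps Heps) as [K HK]. exists K. intros k k' Hk Hk'.
  specialize (HK k' k ltac:(lia) ltac:(lia)). unfold Rdist in HK.
  pose proof (Rle_abs (fsum f k' - fsum f k)). lra.
Qed.

Lemma decay_step_bound (y S r0 rk L : R) : 0 <= y <= 1/4 -> 0 <= S -> 0 <= r0 -> 0 <= L -> 0 <= rk ->
  rk <= r0 / (1 + S) + 11 * L -> (1 - y) * rk <= r0 / (1 + (S + y)) + 11 * L.
Proof.
  intros Hy HS Hr0 HL Hrk H.
  assert (A : (1 - y) * (r0 / (1 + S)) <= r0 / (1 + (S + y))).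
  { unfold Rdiv. rewrite <- Rmult_assoc, (Rmult_comm (1 - y)), Rmult_assoc.
    apply Rmult_le_compat_l; [exact Hr0|].
    apply (Rmult_le_reg_r ((1 + S) * (1 + (S + y)))); [nra|].
    replace ((1 - y) * / (1 + S) * ((1 + S) * (1 + (S + y)))) with ((1 - y) * (1 + (S + y))) by (field; lra).
    replace (/ (1 + (S + y)) * ((1 + S) * (1 + (S + y)))) with (1 + S) by (field; lra). nra. }
  assert ((1 - y) * rk <= (1 - y) * (r0 / (1 + S) + 11 * L)) by (apply Rmult_le_compat_l; lra).
  nra.
Qed.

Section PerturbedDecay.

Variables (r m Lam : nat -> R).
Hypotheses (Hr : forall k, 0 <= r k) (Hm : forall k, 0 <= m k <= 1/2)
  (HLam : forall k, Lam k <= Lam (S k))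
  (Hstep : forall k, r (S k) <= (1 - m k / 2) * r k + 11 * (Lam (S k) - Lam k)).

Lemma Lam_mono k k' : (k <= k')%nat -> Lam k <= Lam k'.
Proof. intros Hk. induction Hk as [|k' _ IH]; [lra | specialize (HLam k'); lra]. Qed.

(* The product of the factors 1 - m_i/2 is at most 1 / (1 + sum_i m_i / 2). *)
Lemma perturbed_decay_bound k0 j :
  r (k0 + j)%nat <= r k0 / (1 + (fsum m (k0 + j) - fsum m k0) / 2) + 11 * (Lam (k0 + j)%nat - Lam k0).
Proof.
  induction j as [|j IH].
  - rewrite Nat.add_0_r. replace (1 + (fsum m k0 - fsum m k0) / 2) with 1 by field.
    replace (r k0 / 1) with (r k0) by field. lra.
  - replace (k0 + S j)%nat with (S (k0 + j)) by lia. simpl fsum.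
    assert (HS : 0 <= (fsum m (k0 + j) - fsum m k0) / 2).
    { assert (fsum m k0 <= fsum m (k0 + j)) by (apply fsum_le_mono; [intros i; apply Hm | lia]). lra. }
    assert (HL : 0 <= Lam (k0 + j)%nat - Lam k0) by (pose proof (Lam_mono k0 (k0 + j) ltac:(lia)); lra).
    pose proof (Hm (k0 + j)%nat).
    pose proof (decay_step_bound (m (k0 + j)%nat / 2) _ _ _ _ ltac:(lra) HS (Hr k0) HL (Hr _) IH).
    replace ((fsum m (k0 + j) + m (k0 + j)%nat - fsum m k0) / 2)
      with ((fsum m (k0 + j) - fsum m k0) / 2 + m (k0 + j)%nat / 2) by field.
    specialize (Hstep (k0 + j)%nat). specialize (HLam (k0 + j)%nat). lra.
Qed.

Lemma perturbed_decay_vanishes :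
  (forall B, exists k, fsum m k > B) ->
  (forall eps, eps > 0 -> exists K, forall k k', (K <= k)%nat -> (k <= k')%nat -> Lam k' - Lam k < eps) ->
  forall eps, eps > 0 -> exists K, forall k, (K <= k)%nat -> r k < eps.
Proof.
  intros Hdiv HC eps He.
  destruct (HC (eps / 44) ltac:(lra)) as [K0 HK0].
  destruct (Hdiv (fsum m K0 + 4 * r K0 / eps)) as [K1 HK1].
  exists (max K0 K1). intros k Hk.
  pose proof (perturbed_decay_bound K0 (k - K0)) as Hb.
  replace (K0 + (k - K0))%nat with k in Hb by lia.
  assert (HLk : Lam k - Lam K0 < eps / 44) by (apply HK0; lia).
  assert (fsum m K1 <= fsum m k) by (apply fsum_le_mono; [intros i; apply Hm | lia]).
  set (X := (fsum m k - fsum m K0) / 2) in *.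
  pose proof (Hr K0).
  assert (HX : r K0 <= eps / 2 * X).
  { assert (2 * r K0 / eps <= X) by (unfold X; unfold Rdiv in *; lra).
    replace (r K0) with (eps / 2 * (2 * r K0 / eps)) by (field; lra).
    apply Rmult_le_compat_l; lra. }
  assert (r K0 / (1 + X) <= eps / 2).
  { apply (Rmult_le_reg_r (1 + X)); [nra|].
    replace (r K0 / (1 + X) * (1 + X)) with (r K0) by (field; nra). nra. }
  lra.
Qed.

End PerturbedDecay.

Section MuPart.

Variables (s : nat -> (nat + nat)%type) (xi mu : nat -> R) (M : option nat).
Hypotheses (Hinj : forall k k', s k = s k' -> k = k')
  (Hs : forall k j, s k = inl j -> below j M /\ xi k = mu j)
  (Hcov : forall j, below j M -> exists k, s k = inl j)
  (Hmu : forall j, below j M -> 0 < mu j).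

Definition mu_part (k : nat) : R := match s k with inl _ => xi k | inr _ => 0 end.

Definition mu_upto (n k : nat) : R :=
  match s k with inl j => if (j <? n)%nat then mu j else 0 | inr _ => 0 end.

Lemma mu_upto_le n k : fsum (mu_upto n) k <= fsum mu_part k.
Proof.
  apply fsum_le. intros i. unfold mu_upto, mu_part. destruct (s i) as [j | j] eqn:Ei; [|lra].
  destruct (Hs i j Ei) as [Hj ->]. specialize (Hmu j Hj). destruct (Nat.ltb_spec j n); lra.
Qed.

Lemma mu_upto_eventually n : (forall j, (j < n)%nat -> below j M) ->
  exists K, forall K', (K <= K')%nat -> fsum (mu_upto n) K' = fsum mu n.
Proof.
  induction n as [|n IH]; intros Hb.
  - exists 0%nat. intros K' _. apply fsum_null. intros i. unfold mu_upto.
    destruct (s i) as [j | j]; [destruct (Nat.ltb_spec j 0); [lia|]|]; reflexivity.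
  - destruct IH as [K HK]; [intros; apply Hb; lia|].
    destruct (Hcov n (Hb n ltac:(lia))) as [k0 Hk0].
    exists (max K (S k0)). intros K' HK'.
    transitivity (fsum (fun i => mu_upto n i + (if Nat.eq_dec i k0 then mu n else 0)) K').
    + apply fsum_ext. intros i. unfold mu_upto. destruct (Nat.eq_dec i k0) as [-> | Hne].
      * rewrite Hk0. destruct (Nat.ltb_spec n (S n)), (Nat.ltb_spec n n); lia || ring.
      * destruct (s i) as [j | j] eqn:Ei; [|ring].
        destruct (Nat.ltb_spec j (S n)), (Nat.ltb_spec j n); try ring; try lia.
        assert (j = n) as -> by lia. exfalso. apply Hne, Hinj. congruence.
    + rewrite fsum_plus, HK, fsum_indicator by lia. reflexivity.
Qed.

Lemma mu_part_unbounded : diverges mu M -> forall B, exists K, fsum mu_part K > B.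
Proof.
  intros Hdiv B. destruct (Hdiv B) as [n [Hb HB]].
  destruct (mu_upto_eventually n Hb) as [K HK]. exists K.
  specialize (HK K (le_n K)). pose proof (mu_upto_le n K). lra.
Qed.

End MuPart.

(* The triple (J, b, g) of the greedy construction. *)
Record state := mk_state { nused : nat; rest : R; rest_dir : vec }.

Definition leftover (s : state) (v : vec) : R := rest s * cnorm2 (inner v (rest_dir s)).

Definition valid_state (s : state) : Prop := sqnorm_is (rest_dir s) 1 /\ 0 <= rest s < 1.

Section Greedy.

Variables (ee : nat -> vec) (xi : nat -> R).
Hypotheses (Hee : forall j, sqnorm_is (ee j) 1) (Hxi : forall k, 0 < xi k < 1).

Definition new_proj (s s' : state) (v : vec) : vec :=
  if Nat.eq_dec (nused s') (S (nused s)) then proj v (ee (nused s)) else vzero.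

Definition new_mass (s s' : state) (v : vec) : R :=
  if Nat.eq_dec (nused s') (S (nused s)) then cnorm2 (inner v (ee (nused s))) else 0.

Definition greedy_step (s : state) (w : R) (s' : state) (F : vec) : Prop :=
  valid_state s' /\ sqnorm_is F 1 /\
  INR (nused s') - rest s' = INR (nused s) - rest s + w /\
  (nused s' = nused s \/ nused s' = S (nused s)) /\
  (forall v, l2 v -> vadd (rscale (rest s) (proj v (rest_dir s))) (new_proj s s' v)
                    = vadd (rscale w (proj v F)) (rscale (rest s') (proj v (rest_dir s')))) /\
  (forall v, l2 v -> leftover s' v <= leftover s v + 11 * new_mass s s' v) /\
  (w <= 1/2 -> forall v, l2 v -> leftover s' v <= (1 - w / 2) * leftover s v + 11 * new_mass s s' v).

Lemma greedy_step_exists s w : valid_state s -> 0 < w < 1 -> exists s' F, greedy_step s w s' F.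
Proof.
  intros [Hg Hb] Hw. destruct s as [J b g]; simpl in *.
  destruct (Rle_lt_dec w b) as [Hwb | Hwb].
  - exists (mk_state J (b - w) g), g. unfold greedy_step, valid_state, new_proj, new_mass, leftover; cbn [nused rest rest_dir].
    destruct (Nat.eq_dec J (S J)) as [E | _]; [lia|].
    repeat split; auto; try lra.
    + intros v Lv. apply functional_extensionality; intros n.
      unfold vadd, rscale, vscale, vzero, cmul; simpl. f_equal; ring.
    + intros v Lv. pose proof (cnorm2_ge0 (inner v g)). nra.
    + intros Hw2 v Lv. pose proof (cnorm2_ge0 (inner v g)).
      assert (0 <= (w - w * b / 2) * cnorm2 (inner v g)) by (apply Rmult_le_pos; nra). nra.
  - destruct (split_step g (ee J) b w Hg (Hee J) ltac:(lra) Hwb ltac:(lra))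
      as (F & H & HF & HH & Hsplit & Hdec & Hdec2).
    exists (mk_state (S J) (1 + b - w) H), F. unfold greedy_step, valid_state, new_proj, new_mass, leftover; cbn [nused rest rest_dir].
    destruct (Nat.eq_dec (S J) (S J)) as [_ | E]; [|lia].
    repeat split; auto; try lra.
    + rewrite S_INR. lra.
    + intros v Lv. specialize (Hdec v Lv). pose proof (cnorm2_ge0 (inner v (ee J))). lra.
    + intros Hw2 v Lv. specialize (Hdec2 Hw2 v Lv).
      pose proof (cnorm2_ge0 (inner v (ee J))). pose proof (cnorm2_ge0 (inner v g)).
      assert (0 <= b * cnorm2 (inner v g)) by (apply Rmult_le_pos; lra). nra.
Qed.

Definition greedy_next (s : state) (k : nat) : state * vec :=
  epsilon (inhabits (s, vzero)) (fun p => greedy_step s (xi k) (fst p) (snd p)).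

(* The direction of the initially empty leftover is irrelevant; it only has to be a unit vector. *)
Fixpoint greedy_state (k : nat) : state :=
  match k with
  | O => mk_state 0 0 (ee 0)
  | S k' => fst (greedy_next (greedy_state k') k')
  end.

Definition greedy_vec (k : nat) : vec := snd (greedy_next (greedy_state k) k).

Lemma greedy_state_spec k :
  valid_state (greedy_state k) /\ greedy_step (greedy_state k) (xi k) (greedy_state (S k)) (greedy_vec k).
Proof.
  assert (Hnext : forall k, valid_state (greedy_state k) ->
            greedy_step (greedy_state k) (xi k) (greedy_state (S k)) (greedy_vec k)).
  { intros k' Hv. apply (epsilon_spec (inhabits (greedy_state k', vzero))
                           (fun p => greedy_step (greedy_state k') (xi k') (fst p) (snd p))).
    destruct (greedy_step_exists _ _ Hv (Hxi k')) as (s' & F & HF). exists (s', F). exact HF. }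
  induction k as [|k [_ Hk]].
  - assert (Hv : valid_state (greedy_state 0)) by (split; simpl; [apply Hee | lra]).
    split; [exact Hv | apply Hnext, Hv].
  - destruct Hk as [Hv _]. split; [exact Hv | apply Hnext, Hv].
Qed.

Lemma greedy_total_weight k : INR (nused (greedy_state k)) - rest (greedy_state k) = fsum xi k.
Proof.
  induction k as [|k IH]; [simpl; ring|].
  destruct (greedy_state_spec k) as [_ (_ & _ & Hw & _)]. rewrite Hw, IH. reflexivity.
Qed.

Lemma greedy_nused_mono k k' : (k <= k')%nat -> (nused (greedy_state k) <= nused (greedy_state k'))%nat.
Proof.
  intros Hk. induction Hk as [|k' _ IH]; [lia|].
  destruct (greedy_state_spec k') as [_ (_ & _ & _ & HJ & _)]. lia.
Qed.

Variable (E : nat -> op).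
Hypothesis HE : forall j v, l2 v -> E j v = proj v (ee j).

Lemma psum_new_proj s s' v : l2 v -> (nused s' = nused s \/ nused s' = S (nused s)) ->
  psum E v (nused s') = vadd (psum E v (nused s)) (new_proj s s' v).
Proof.
  intros Lv HJ. unfold new_proj. destruct (Nat.eq_dec (nused s') (S (nused s))) as [-> | Hne].
  - simpl. rewrite HE by exact Lv. reflexivity.
  - destruct HJ as [-> | HJ]; [|contradiction].
    apply functional_extensionality; intros n. unfold vadd, vzero; simpl.
    destruct (psum E v (nused s) n); simpl; f_equal; ring.
Qed.

Lemma greedy_partial_sum v k : l2 v ->
  psum (fun j v => rscale (xi j) (proj v (greedy_vec j))) v k
  = vsub (psum E v (nused (greedy_state k)))
         (rscale (rest (greedy_state k)) (proj v (rest_dir (greedy_state k)))).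
Proof.
  intros Lv. induction k as [|k IH].
  - apply functional_extensionality; intros n.
    simpl. unfold vzero, vsub, rscale, vscale, cmul; simpl. f_equal; ring.
  - destruct (greedy_state_spec k) as [_ (_ & _ & _ & HJ & Hsplit & _)].
    cbn [psum]. rewrite IH, (psum_new_proj _ _ v Lv HJ).
    apply vadd_vsub_exchange, Hsplit, Lv.
Qed.

End Greedy.

Lemma norm_cv_l2 u w : (forall n, l2 (u n)) -> norm_cv u w -> l2 w.
Proof.
  intros Lu Hcv. destruct (Hcv 1 ltac:(lra)) as [N HN]. destruct (HN N (le_n N)) as [l [Hl _]].
  replace w with (vsub (u N) (vsub (u N) w)).
  - apply l2_vsub; [apply Lu | exists l; exact Hl].
  - apply functional_extensionality; intros n. unfold vsub. destruct (u N n), (w n); simpl; f_equal; ring.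
Qed.

Lemma norm_cv_sqnorm_bound u w : (forall n, l2 (u n)) -> norm_cv u w ->
  exists N, forall n, (N <= n)%nat -> sqnorm (u n) <= 2 + 2 * sqnorm w.
Proof.
  intros Lu Hcv. pose proof (norm_cv_l2 u w Lu Hcv) as Lw.
  destruct (Hcv 1 ltac:(lra)) as [N HN]. exists N. intros n Hn. destruct (HN n Hn) as [l [Hl Hl1]].
  replace (u n) with (vsub (vsub (u n) w) (vscale (-1, 0) w)).
  - eapply Rle_trans; [apply sqnorm_vsub_le; [exists l; exact Hl | apply l2_vscale, Lw]|].
    rewrite sqnorm_vscale, (sqnorm_is_unique _ _ Hl) by exact Lw. unfold cnorm2; simpl. lra.
  - apply functional_extensionality; intros k. unfold vsub, vscale, cmul.
    destruct (u n k), (w k); simpl; f_equal; ring.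
Qed.

Section Bessel.

Variables (ee : nat -> vec) (E : nat -> op) (v : vec).
Hypotheses (Hee : forall j, sqnorm_is (ee j) 1) (Lv : l2 v) (HE : forall j, E j v = proj v (ee j)).

Definition coeff_mass (j : nat) : R := cnorm2 (inner v (ee j)).

Lemma l2_psum n : l2 (psum E v n).
Proof.
  induction n as [|n IH]; [apply l2_vzero|].
  cbn [psum]. rewrite HE. apply l2_vadd, l2_vscale, unit_l2, Hee; exact IH.
Qed.

Lemma inner_psum n : fst (inner (psum E v n) v) = fsum coeff_mass n.
Proof.
  induction n as [|n IH]; [cbn [psum]; rewrite inner_vzero_l; reflexivity|].
  cbn [psum fsum]. rewrite HE, inner_addl by first [apply l2_psum | exact Lv | apply l2_vscale, unit_l2, Hee].
  cbn [fst]. rewrite IH. f_equal.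
  unfold proj. rewrite inner_scalel, (inner_conj v (ee n)) by first [exact Lv | apply unit_l2, Hee].
  unfold coeff_mass, cmul, cconj, cnorm2. destruct (inner v (ee n)); simpl; ring.
Qed.

Lemma coeff_mass_cauchy A : norm_cv (psum E v) A ->
  forall eps, eps > 0 -> exists K, forall k k', (K <= k)%nat -> (k <= k')%nat ->
    fsum coeff_mass k' - fsum coeff_mass k < eps.
Proof.
  intros Hcv. apply (fsum_bounded_cauchy _ ((2 + 2 * sqnorm A + sqnorm v) / 2)).
  { intros j; apply cnorm2_ge0. }
  destruct (norm_cv_sqnorm_bound _ _ l2_psum Hcv) as [N HN].
  assert (Hlate : forall n, (N <= n)%nat -> fsum coeff_mass n <= (2 + 2 * sqnorm A + sqnorm v) / 2).
  { intros n Hn. rewrite <- inner_psum. specialize (HN n Hn).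
    pose proof (inner_re_le_mid _ _ (l2_psum n) Lv). lra. }
  intros n. destruct (Nat.le_gt_cases N n) as [Hn | Hn]; [apply Hlate, Hn|].
  eapply Rle_trans; [apply fsum_le_mono with (k' := N) | apply Hlate]; [intros; apply cnorm2_ge0 | lia | lia].
Qed.

End Bessel.

Lemma new_mass_fsum ee s s' v : (nused s' = nused s \/ nused s' = S (nused s)) ->
  new_mass ee s s' v = fsum (coeff_mass ee v) (nused s') - fsum (coeff_mass ee v) (nused s).
Proof.
  intros HJ. unfold new_mass. destruct (Nat.eq_dec (nused s') (S (nused s))) as [-> | Hne].
  - simpl. unfold coeff_mass. ring.
  - destruct HJ as [-> | HJ]; [ring | contradiction].
Qed.

Section Convergence.

Variables (ee : nat -> vec) (xi m : nat -> R) (E : nat -> op) (A : op).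
Hypotheses (Hee : forall j, sqnorm_is (ee j) 1) (Hxi : forall k, 0 < xi k < 1)
  (HE : forall j v, l2 v -> E j v = proj v (ee j)) (hA : sot_sum E A)
  (Hm : forall k, m k = 0 \/ (m k = xi k /\ xi k <= 1/2))
  (Hm_div : forall B, exists K, fsum m K > B).

Lemma greedy_nused_unbounded n : exists K, forall k, (K <= k)%nat -> (n <= nused (greedy_state ee xi k))%nat.
Proof.
  assert (Hm_xi : forall k, 0 <= m k <= xi k) by (intros k; specialize (Hxi k); destruct (Hm k) as [-> | [-> _]]; lra).
  destruct (Hm_div (INR n)) as [K HK]. exists K. intros k Hk.
  assert (fsum m K <= fsum m k) by (apply fsum_le_mono; [apply Hm_xi | exact Hk]).
  assert (fsum m k <= fsum xi k) by (apply fsum_le; apply Hm_xi).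
  pose proof (greedy_total_weight ee xi Hee Hxi k).
  destruct (greedy_state_spec ee xi Hee Hxi k) as [[_ Hb] _].
  apply INR_le. lra.
Qed.

Lemma greedy_leftover_vanishes v : l2 v ->
  forall eps, eps > 0 -> exists K, forall k, (K <= k)%nat -> leftover (greedy_state ee xi k) v < eps.
Proof.
  intros Lv. pose proof (fun j => HE j v Lv) as HEv.
  set (Lam := fun k => fsum (coeff_mass ee v) (nused (greedy_state ee xi k))).
  apply (perturbed_decay_vanishes _ m Lam).
  - intros k. destruct (greedy_state_spec ee xi Hee Hxi k) as [[_ Hb] _].
    apply Rmult_le_pos; [lra | apply cnorm2_ge0].
  - intros k. specialize (Hxi k). destruct (Hm k) as [-> | [-> ?]]; lra.
  - intros k. apply fsum_le_mono; [intros; apply cnorm2_ge0 | apply (greedy_nused_mono ee xi Hee Hxi), le_S, le_n].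
  - intros k. destruct (greedy_state_spec ee xi Hee Hxi k) as [_ (_ & _ & _ & HJ & _ & Hdec & Hdec2)].
    unfold Lam. rewrite <- new_mass_fsum by exact HJ.
    destruct (Hm k) as [-> | [-> Hk]].
    + rewrite Rdiv_0_l, Rminus_0_r, Rmult_1_l. apply Hdec, Lv.
    + apply Hdec2; assumption.
  - exact Hm_div.
  - intros eps Heps. destruct (coeff_mass_cauchy ee E v Hee Lv HEv (A v) (hA v Lv) eps Heps) as [N HN].
    destruct (greedy_nused_unbounded N) as [K HK]. exists K. intros k k' Hk Hk'.
    apply HN; [apply HK, Hk | apply (greedy_nused_mono ee xi Hee Hxi), Hk'].
Qed.

(* The k-th partial sum differs from sum_(j < J) E_j v by the leftover b <v, g> g, whose squared norm
   is b^2 |<v, g>|^2 <= b |<v, g>|^2. *)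
Lemma greedy_sot_sum : sot_sum (fun k v => rscale (xi k) (proj v (greedy_vec ee xi k))) A.
Proof.
  intros v Lv eps Heps.
  destruct (hA v Lv (eps / 4) ltac:(lra)) as [N1 HN1].
  destruct (greedy_nused_unbounded N1) as [K1 HK1].
  destruct (greedy_leftover_vanishes v Lv (eps / 4) ltac:(lra)) as [K2 HK2].
  exists (max K1 K2). intros k Hk.
  set (s := greedy_state ee xi k).
  destruct (HN1 (nused s) ltac:(apply HK1; lia)) as [l [Hl Hl4]].
  specialize (HK2 k ltac:(lia)). fold s in HK2.
  destruct (greedy_state_spec ee xi Hee Hxi k) as [[Hg Hb] _]. fold s in Hg, Hb.
  set (X := rscale (rest s) (proj v (rest_dir s))).
  assert (LX : l2 X) by (apply l2_vscale, l2_vscale, unit_l2, Hg).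
  assert (EW : vsub (psum (fun j v => rscale (xi j) (proj v (greedy_vec ee xi j))) v k) (A v)
               = vsub (vsub (psum E v (nused s)) (A v)) X).
  { rewrite (greedy_partial_sum ee xi Hee Hxi E HE v k Lv).
    apply functional_extensionality; intros n. unfold vsub. fold s X.
    destruct (psum E v (nused s) n), (A v n), (X n); simpl; f_equal; ring. }
  rewrite EW. exists (sqnorm (vsub (vsub (psum E v (nused s)) (A v)) X)). split.
  - apply sqnorm_is_sqnorm, l2_vsub; [exists l; exact Hl | exact LX].
  - eapply Rle_lt_trans; [apply sqnorm_vsub_le; [exists l; exact Hl | exact LX]|].
    rewrite (sqnorm_is_unique _ _ Hl).
    assert (sqnorm X <= leftover s v).
    { unfold X, rscale, proj, leftover.
      rewrite sqnorm_vscale, sqnorm_vscale, (sqnorm_is_unique _ _ Hg)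
        by (try apply l2_vscale; apply unit_l2, Hg).
      unfold cnorm2 at 1; simpl. pose proof (cnorm2_ge0 (inner v (rest_dir s))).
      assert (0 <= rest s * (1 - rest s) * cnorm2 (inner v (rest_dir s)))
        by (apply Rmult_le_pos; [apply Rmult_le_pos|]; lra).
      nra. }
    lra.
Qed.

End Convergence.

Lemma proj_rank_one e : sqnorm_is e 1 -> rank_one_proj (fun v => proj v e).
Proof.
  intros He. exists e. split; [exact He|].
  intros v Lv. exists (inner v e). split; [apply inner_is_inner; [exact Lv | apply unit_l2, He] | reflexivity].
Qed.

Lemma rank_one_family (E : nat -> op) : (forall j, rank_one_proj (E j)) ->
  exists ee : nat -> vec, (forall j, sqnorm_is (ee j) 1) /\ forall j v, l2 v -> E j v = proj v (ee j).
Proof.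
  intros hE. exists (fun j => proj1_sig (constructive_indefinite_description _ (hE j))).
  split; intros j; destruct (constructive_indefinite_description _ (hE j)) as [e [He HEe]]; simpl.
  - exact He.
  - intros v Lv. destruct (HEe v Lv) as [c [Hc ->]]. unfold proj.
    rewrite (inner_is_unique v e c Lv (unit_l2 _ He) Hc). reflexivity.
Qed.

Theorem lemma3p4 (A : op) (E : nat -> op)
  (hE : forall j, rank_one_proj (E j)) (hA : sot_sum E A)
  (M N : option nat) (mu lam : nat -> R)
  (hmu : forall j, below j M -> 0 < mu j <= 1/2)
  (hlam : forall j, below j N -> 0 < lam j < 1/2)
  (xi : nat -> R) (hxi : merges xi mu M lam N)
  (hdiv : diverges mu M) :
  Adm A xi.
Proof.
  destruct hxi as (s & sinj & sval & scovM & _).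
  assert (Hs : forall k j, s k = inl j -> below j M /\ xi k = mu j)
    by (intros k j Hk; specialize (sval k); rewrite Hk in sval; exact sval).
  assert (Hxi : forall k, 0 < xi k < 1).
  { intros k. specialize (sval k). destruct (s k) as [j | j]; destruct sval as [Hb ->];
      [specialize (hmu j Hb) | specialize (hlam j Hb)]; lra. }
  destruct (rank_one_family E hE) as (ee & Hee & HE).
  split; [intros k; specialize (Hxi k); lra|].
  split; [exists 1; intros k; specialize (Hxi k); lra|].
  exists (fun k v => proj v (greedy_vec ee xi k)). split.
  - intros k. apply proj_rank_one. apply (greedy_state_spec ee xi Hee Hxi k).
  - apply (greedy_sot_sum ee xi (mu_part s xi) E A Hee Hxi HE hA).
    + intros k. unfold mu_part. destruct (s k) as [j |] eqn:Hk; [right | left; reflexivity].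
      destruct (Hs k j Hk) as [Hj ->]. split; [reflexivity | apply hmu, Hj].
    + apply (mu_part_unbounded s xi mu M sinj Hs scovM); [intros j Hj; apply hmu, Hj | exact hdiv].
Qed.
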